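(* Let $P$ and $Q$ be distinct planes in $\mathbb{H}^4$ intersecting in a single point. Then $H_PH_Q$ is a type-II orientation preserving elliptic isometry.
   Context: A plane is a $2$-dimensional totally geodesic subspace of $\mathbb{H}^4$. For a plane $P$, the half-turn $H_P$ is the composition of reflections in two orthogonal hyperplanes intersecting in $P$. An elliptic isometry of $\mathbb{H}^4$ is of type II if it fixes a unique point of $\mathbb{H}^4$. *)

(* Hyperboloid model of H^4 inside Minkowski space R^{1,4}. *)
From HB Require Import structures.
From mathcomp Require Import all_boot all_order all_algebra.
From mathcomp Require Import reals.
Set Implicit Arguments. Unset Strict Implicit. Unset Printing Implicit Defensive.
Import Order.TTheory GRing.Theory Num.Theory.
Local Open Scope ring_scope.

Section Hyp.
Variable R : realType.

Definition Jm : 'M[R]_5 := diag_mx (\row_(i < 5) (if i == ord0 then -1 else 1)).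
Definition lform (x y : 'cV[R]_5) : R := (x^T *m Jm *m y) ord0 ord0.

Definition hpoint (x : 'cV[R]_5) : Prop := lform x x = -1 /\ 0 < x ord0 ord0.

(* isometries of H^4 = positive Lorentz matrices, acting by x |-> A *m x *)
Definition isometry (A : 'M[R]_5) : Prop :=
  A^T *m Jm *m A = Jm /\ (forall x, hpoint x -> hpoint (A *m x)).

Definition orientation_preserving (A : 'M[R]_5) : Prop := \det A = 1.

Definition fixes_point (A : 'M[R]_5) (x : 'cV[R]_5) : Prop := hpoint x /\ A *m x = x.

Definition elliptic (A : 'M[R]_5) : Prop := isometry A /\ exists x, fixes_point A x.

Definition elliptic_typeII (A : 'M[R]_5) : Prop :=
  isometry A /\ exists! x, fixes_point A x.

(* a plane: 2-dimensional totally geodesic subspace of H^4, i.e. the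
   (nonempty) intersection of H^4 with a 3-dimensional linear subspace *)
Definition plane (P : 'cV[R]_5 -> Prop) : Prop :=
  exists W : 'M[R]_(3, 5), \rank W = 3%N /\
    (forall x, P x <-> hpoint x /\ (x^T <= W)%MS) /\ (exists x, P x).

(* hyperplane with spacelike normal v: {x in H^4 | <x,v> = 0};
   reflection in it: x |-> x - 2 <x,v>/<v,v> v *)
Definition refl (v : 'cV[R]_5) : 'M[R]_5 :=
  1%:M - (2 / lform v v) *: (v *m (v^T *m Jm)).

(* H_P : composition of the reflections in two orthogonal hyperplanes
   (normals v, w spacelike and Lorentz-orthogonal) whose intersection is P *)
Definition half_turn (P : 'cV[R]_5 -> Prop) (H : 'M[R]_5) : Prop :=
  exists v w : 'cV[R]_5,
    [/\ 0 < lform v v, 0 < lform w w, lform v w = 0,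
        (forall x, P x <-> hpoint x /\ lform x v = 0 /\ lform x w = 0)
      & H = refl v *m refl w].

End Hyp.

From Pilot Require Import Defs.
From HB Require Import structures.
From mathcomp Require Import all_boot all_order all_algebra.
From mathcomp Require Import reals ring lra.
Set Implicit Arguments. Unset Strict Implicit. Unset Printing Implicit Defensive.
Import Order.TTheory GRing.Theory Num.Theory.
Local Open Scope ring_scope.

(* Let p be the common point of P and Q.  A fixed point y of H_P H_Q gives
   d := y - H_Q y with H_P d = H_Q d = -d, so d lies both in the span of the
   normals of P and in that of the normals of Q.  These spans meet only in 0:
   otherwise p and the four normals are linearly dependent, some nonzero u is
   Lorentz-orthogonal to all of them, u is spacelike because it is orthogonal
   to the point p, and the geodesic through p in the direction u consists of
   further common points of P and Q.  Hence d = 0, y is fixed by both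
   half-turns, lies on P and on Q, and is therefore p.  The orientation claim
   is det(reflection) = -1, four times. *)

Lemma det_add1_mulmx (R : comNzRingType) n (u : 'cV[R]_n) (r : 'rV[R]_n) :
  \det (1%:M + u *m r) = 1 + (r *m u) 0 0.
Proof.
have lower : block_mx 1%:M (- u) r 1%:M =
    block_mx 1%:M 0 r 1%:M *m block_mx 1%:M (- u) 0 (1%:M + r *m u) :> 'M_(n + 1).
  by rewrite mulmx_block !mul1mx !mulmx1 !mul0mx ?addr0 ?add0r mulmxN addrCA addNr addr0.
have upper : block_mx 1%:M (- u) r 1%:M =
    block_mx (1%:M + u *m r) (- u) 0 1%:M *m block_mx 1%:M 0 r 1%:M :> 'M_(n + 1).
  by rewrite mulmx_block !mul1mx !mulmx1 !mul0mx mulmx0 ?addr0 ?add0r mulNmx addrK.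
have := congr1 determinant lower; rewrite upper !det_mulmx !det_lblock !det_ublock.
by rewrite !det1 !mul1r !mulr1 det_mx11 !mxE => ->.
Qed.

Lemma cauchy_schwarz4 (R : realFieldType) (a1 a2 a3 a4 b1 b2 b3 b4 : R) :
  (a1 * b1 + a2 * b2 + a3 * b3 + a4 * b4) ^+ 2
    <= (a1 ^+ 2 + a2 ^+ 2 + a3 ^+ 2 + a4 ^+ 2) * (b1 ^+ 2 + b2 ^+ 2 + b3 ^+ 2 + b4 ^+ 2).
Proof.
rewrite -subr_ge0.
have -> : (a1 ^+ 2 + a2 ^+ 2 + a3 ^+ 2 + a4 ^+ 2) * (b1 ^+ 2 + b2 ^+ 2 + b3 ^+ 2 + b4 ^+ 2)
    - (a1 * b1 + a2 * b2 + a3 * b3 + a4 * b4) ^+ 2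
  = (a1 * b2 - a2 * b1) ^+ 2 + (a1 * b3 - a3 * b1) ^+ 2 + (a1 * b4 - a4 * b1) ^+ 2
    + (a2 * b3 - a3 * b2) ^+ 2 + (a2 * b4 - a4 * b2) ^+ 2 + (a3 * b4 - a4 * b3) ^+ 2.
  by ring.
by rewrite !addr_ge0 // sqr_ge0.
Qed.

Section Lorentz.
Variable R : realType.
Notation V := 'cV[R]_5.

Definition c1 : 'I_5 := Ordinal (isT : (1 < 5)%N).
Definition c2 : 'I_5 := Ordinal (isT : (2 < 5)%N).
Definition c3 : 'I_5 := Ordinal (isT : (3 < 5)%N).
Definition c4 : 'I_5 := Ordinal (isT : (4 < 5)%N).

Lemma sum_ord5 (T : nmodType) (f : 'I_5 -> T) :
  \sum_(i < 5) f i = f ord0 + f c1 + f c2 + f c3 + f c4.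
Proof.
rewrite !big_ord_recr big_ord0 /= add0r.
by repeat congr (_ + _); congr f; apply: val_inj.
Qed.

Lemma col5_eq0 (u : V) :
  u ord0 0 = 0 -> u c1 0 = 0 -> u c2 0 = 0 -> u c3 0 = 0 -> u c4 0 = 0 -> u = 0.
Proof.
move=> u0 u1 u2 u3 u4; apply/matrixP => i j; rewrite (ord1 j) mxE.
case: i => [[|[|[|[|[|k]]]]] lti] //.
- by rewrite -u0; congr (u _ 0); apply: val_inj.
- by rewrite -u1; congr (u _ 0); apply: val_inj.
- by rewrite -u2; congr (u _ 0); apply: val_inj.
- by rewrite -u3; congr (u _ 0); apply: val_inj.
- by rewrite -u4; congr (u _ 0); apply: val_inj.
Qed.

Lemma lformE (x y : V) : lform x y =
  - x ord0 0 * y ord0 0 + x c1 0 * y c1 0 + x c2 0 * y c2 0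
  + x c3 0 * y c3 0 + x c4 0 * y c4 0.
Proof. by rewrite /lform /Jm !mxE sum_ord5 !mxE !sum_ord5 !mxE /=; ring. Qed.

Lemma lformC (x y : V) : lform x y = lform y x.
Proof. by rewrite !lformE; ring. Qed.

Lemma lformDl (x y z : V) : lform (x + y) z = lform x z + lform y z.
Proof. by rewrite !lformE !mxE; ring. Qed.

Lemma lformDr (x y z : V) : lform z (x + y) = lform z x + lform z y.
Proof. by rewrite !lformE !mxE; ring. Qed.

Lemma lformBl (x y z : V) : lform (x - y) z = lform x z - lform y z.
Proof. by rewrite !lformE !mxE; ring. Qed.

Lemma lformBr (x y z : V) : lform z (x - y) = lform z x - lform z y.
Proof. by rewrite !lformE !mxE; ring. Qed.

Lemma lformZl a (x z : V) : lform (a *: x) z = a * lform x z.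
Proof. by rewrite !lformE !mxE; ring. Qed.

Lemma lformZr a (x z : V) : lform z (a *: x) = a * lform z x.
Proof. by rewrite !lformE !mxE; ring. Qed.

Lemma lform_mulmx (A : 'M[R]_5) (x y : V) :
  lform (A *m x) (A *m y) = (x^T *m (A^T *m Jm R *m A) *m y) 0 0.
Proof. by rewrite /lform trmx_mul !mulmxA. Qed.

Lemma lorentz_of_lform (A : 'M[R]_5) :
  (forall x y, lform (A *m x) (A *m y) = lform x y) -> A^T *m Jm R *m A = Jm R.
Proof.
have entry (B : 'M[R]_5) i j : ((delta_mx i (0 : 'I_1))^T *m B *m delta_mx j (0 : 'I_1)) 0 0 = B i j.
  by rewrite trmx_delta -rowE -colE !mxE.
by move=> A_lform; apply/matrixP => i j; rewrite -entry -lform_mulmx A_lform /lform entry.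
Qed.

(* By the reverse Cauchy-Schwarz inequality, a point of the lower sheet has
   positive product with every point of the upper sheet. *)
Lemma hpoint_lform_neg (x y : V) :
  hpoint x -> lform y y = -1 -> lform x y < 0 -> hpoint y.
Proof.
case=> xx x0_gt0 yy xy; split => //; move: xx yy xy; rewrite !lformE.
have := cauchy_schwarz4 (x c1 0) (x c2 0) (x c3 0) (x c4 0)
                        (y c1 0) (y c2 0) (y c3 0) (y c4 0).
move: x0_gt0; move: (x ord0 0) (x c1 0) (x c2 0) (x c3 0) (x c4 0).
move: (y ord0 0) (y c1 0) (y c2 0) (y c3 0) (y c4 0).
move=> y0 y1 y2 y3 y4 x0 x1 x2 x3 x4 x0_gt0 cs xx yy xy.
rewrite ltNge; apply/negP => y0_le0.
set S := x1 * y1 + x2 * y2 + x3 * y3 + x4 * y4 in cs.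
have S_lt : S < x0 * y0 by rewrite /S; lra.
have x0y0_le0 : x0 * y0 <= 0 by nra.
have S_sq : (x0 * y0) ^+ 2 < S ^+ 2 by nra.
have x_sq : x1 ^+ 2 + x2 ^+ 2 + x3 ^+ 2 + x4 ^+ 2 = x0 ^+ 2 - 1 by lra.
have y_sq : y1 ^+ 2 + y2 ^+ 2 + y3 ^+ 2 + y4 ^+ 2 = y0 ^+ 2 - 1 by lra.
by rewrite x_sq y_sq in cs; nra.
Qed.

Lemma lform_orth_hpoint_gt0 (p u : V) :
  hpoint p -> lform u p = 0 -> u != 0 -> 0 < lform u u.
Proof.
case=> pp p0_gt0 up; rewrite ltNge; apply: contra => uu_le0; apply/eqP.
move: pp up uu_le0; rewrite !lformE.
have := cauchy_schwarz4 (p c1 0) (p c2 0) (p c3 0) (p c4 0)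
                        (u c1 0) (u c2 0) (u c3 0) (u c4 0).
have := @col5_eq0 u; move: p0_gt0.
move: (p ord0 0) (p c1 0) (p c2 0) (p c3 0) (p c4 0).
move: (u ord0 0) (u c1 0) (u c2 0) (u c3 0) (u c4 0).
move=> u0 u1 u2 u3 u4 p0 p1 p2 p3 p4 p0_gt0 u_eq0 cs pp up uu.
have p_sq : p1 ^+ 2 + p2 ^+ 2 + p3 ^+ 2 + p4 ^+ 2 = p0 ^+ 2 - 1 by lra.
have u_sq : u1 ^+ 2 + u2 ^+ 2 + u3 ^+ 2 + u4 ^+ 2 <= u0 ^+ 2 by lra.
have S_eq : p1 * u1 + p2 * u2 + p3 * u3 + p4 * u4 = p0 * u0 by lra.
rewrite p_sq S_eq in cs.
have u0_eq0 : u0 = 0.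
  have : (p0 ^+ 2 - 1) * (u1 ^+ 2 + u2 ^+ 2 + u3 ^+ 2 + u4 ^+ 2) <= (p0 ^+ 2 - 1) * u0 ^+ 2.
    by apply: ler_wpM2l => //; nra.
  by move=> le; apply/eqP; rewrite -sqrf_eq0; apply/eqP; nra.
subst u0; have u_sq0 : u1 ^+ 2 + u2 ^+ 2 + u3 ^+ 2 + u4 ^+ 2 = 0 by nra.
by apply: u_eq0 => //; nra.
Qed.

Lemma refl_mulmx (v x : V) : refl v *m x = x - (2 / lform v v * lform v x) *: v.
Proof.
rewrite /refl mulmxBl mul1mx -scalemxAl -!mulmxA.
by rewrite [v^T *m (Jm R *m x)]mx11_scalar mul_mx_scalar scalerA /lform mulmxA.
Qed.

Section Reflection.
Variable v : V.
Hypothesis vv_gt0 : 0 < lform v v.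

Lemma lform_refl (x y : V) : lform (refl v *m x) (refl v *m y) = lform x y.
Proof.
rewrite !refl_mulmx !(lformBl, lformBr, lformZl, lformZr) [lform x v]lformC.
by move: (lform v x) (lform v y) => a b; field; exact: lt0r_neq0.
Qed.

Lemma hpoint_refl (x : V) : hpoint x -> hpoint (refl v *m x).
Proof.
move=> hx; have [xx _] := hx; apply: hpoint_lform_neg hx _ _; first by rewrite lform_refl.
rewrite refl_mulmx lformBr lformZr xx [lform x v]lformC.
have : 0 <= 2 / lform v v * lform v x * lform v x.
  by rewrite -mulrA; apply: mulr_ge0; [rewrite divr_ge0 // ltW | rewrite -expr2 sqr_ge0].
by lra.
Qed.

Lemma isometry_refl : Defs.isometry (refl v).
Proof.
by split; [apply: lorentz_of_lform => x y; rewrite lform_refl | apply: hpoint_refl].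
Qed.

Lemma det_refl : \det (refl v) = -1.
Proof.
rewrite /refl -scaleNr scalemxAl det_add1_mulmx -scalemxAr mxE -/(lform v v).
by field; exact: lt0r_neq0.
Qed.

End Reflection.

Lemma isometry_mulmx (A B : 'M[R]_5) :
  Defs.isometry A -> Defs.isometry B -> Defs.isometry (A *m B).
Proof.
move=> [AJA A_hp] [BJB B_hp]; split; last by move=> x hx; rewrite -mulmxA; apply/A_hp/B_hp.
by rewrite trmx_mul -!mulmxA (mulmxA A^T) (mulmxA (A^T *m _)) AJA !mulmxA.
Qed.

Section HalfTurn.
Variables v w : V.
Hypotheses (vv_gt0 : 0 < lform v v) (ww_gt0 : 0 < lform w w) (vw : lform v w = 0).

Lemma half_turn_mulmx (x : V) : (refl v *m refl w) *m x =
  x - (2 / lform v v * lform v x) *: v - (2 / lform w w * lform w x) *: w.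
Proof.
by rewrite -mulmxA !refl_mulmx lformBr lformZr vw mulr0 subr0 addrAC.
Qed.

Lemma half_turn_invol (x : V) :
  (refl v *m refl w) *m ((refl v *m refl w) *m x) = x.
Proof.
rewrite [in LHS]half_turn_mulmx half_turn_mulmx.
rewrite !(lformBr, lformZr) vw [lform w v]lformC vw !mulr0 !subr0.
have reflect_coef (a : V) : 0 < lform a a ->
    2 / lform a a * (lform a x - 2 / lform a a * lform a x * lform a a)
    = - (2 / lform a a * lform a x).
  by move=> aa_gt0; field; exact: lt0r_neq0.
by rewrite !reflect_coef // !scaleNr !opprK addrAC subrK subrK.
Qed.

Lemma half_turn_fixE (x : V) :
  (refl v *m refl w) *m x = x <-> lform x v = 0 /\ lform x w = 0.
Proof.
rewrite half_turn_mulmx [lform v x]lformC [lform w x]lformC; split; last first.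
  by case=> -> ->; rewrite !mulr0 !scale0r !subr0.
move=> fix_x; have := congr1 (lform v) fix_x; have := congr1 (lform w) fix_x.
rewrite !(lformBr, lformZr) vw [lform w v]lformC vw [lform v x]lformC [lform w x]lformC.
have unscale (a : V) : 0 < lform a a ->
    2 / lform a a * lform x a * lform a a = 2 * lform x a.
  by move=> aa_gt0; field; exact: lt0r_neq0.
by rewrite !unscale //; split; lra.
Qed.

Lemma half_turn_anti (x : V) : (refl v *m refl w) *m x = - x ->
  exists a b, x = a *: v + b *: w.
Proof.
rewrite half_turn_mulmx => anti_x.
set a := 2 / lform v v * lform v x in anti_x; set b := 2 / lform w w * lform w x in anti_x.
have two_x : 2 *: x = a *: v + b *: w.
  apply/eqP; rewrite -subr_eq0; apply/eqP.
  rewrite -[RHS](subrr (- x)) -{1}anti_x scalerDl scale1r.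
  by rewrite opprK opprD !addrA [RHS]addrC !addrA.
exists (a / 2), (b / 2).
have -> : x = 2^-1 *: (2 *: x) by rewrite scalerA mulVf ?scale1r // pnatr_eq0.
by rewrite two_x scalerDr !scalerA ![2^-1 * _]mulrC.
Qed.

End HalfTurn.

(* The point cosh(t) p + sinh(t) u/|u| for sinh(t) = 1 on the geodesic through p
   in the direction u. *)
Lemma exists_other_hpoint (p u : V) : hpoint p -> lform u p = 0 -> 0 < lform u u ->
  exists q, [/\ hpoint q, q <> p &
    forall z, lform p z = 0 -> lform u z = 0 -> lform q z = 0].
Proof.
move=> hp up uu_gt0; have [pp _] := hp.
pose s := Num.sqrt (lform u u); pose t := Num.sqrt (2 : R).
have s_neq0 : s != 0 by rewrite lt0r_neq0 // sqrtr_gt0.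
have ss : s ^+ 2 = lform u u by rewrite sqr_sqrtr // ltW.
have tt : t ^+ 2 = 2 by rewrite sqr_sqrtr.
pose q := t *: p + s^-1 *: u.
have pq : lform p q = - t by rewrite lformDr !lformZr pp [lform p u]lformC up; ring.
have qq : lform q q = -1.
  rewrite !(lformDl, lformDr, lformZl, lformZr) pp up [lform p u]lformC up -ss.
  have -> : s^-1 * (s^-1 * s ^+ 2) = 1 by field.
  by nra.
exists q; split.
- by apply: hpoint_lform_neg hp qq _; rewrite pq oppr_lt0 sqrtr_gt0.
- move=> qp; move: pq; rewrite qp pp => /eqP; rewrite eqr_opp => /eqP t1.
  by move: tt; rewrite -t1 expr1n; lra.
- by move=> z pz uz; rewrite lformDl !lformZl pz uz !mulr0 addr0.
Qed.

Lemma exists_lform_orth_dependent (f : 'I_5 -> V) (c : 'cV[R]_5) :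
  c != 0 -> \sum_j c j 0 *: f j = 0 ->
  exists2 u : V, u != 0 & forall j, lform u (f j) = 0.
Proof.
move=> c_neq0 dep.
pose F : 'M[R]_5 := \matrix_(i, j) f j i 0.
have Fc : F *m c = 0.
  rewrite -dep; apply/matrixP => i k; rewrite (ord1 k) !mxE summxE.
  by apply: eq_bigr => j _; rewrite !mxE mulrC.
have detF : \det (Jm R *m F) == 0.
  rewrite det_mulmx -[\det F]det_tr mulf_eq0; apply/orP; right; apply/det0P.
  by exists c^T; rewrite ?trmx_eq0 // -trmx_mul Fc trmx0.
have [r r_neq0 rJF] := det0P detF.
exists r^T; first by rewrite trmx_eq0.
move=> j; have colF : col j F = f j by apply/matrixP => i k; rewrite (ord1 k) !mxE.
by rewrite /lform trmxK -colF colE mulmxA -colE -mulmxA rJF col0 mxE.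
Qed.

Section TwoHalfTurns.
Variables v1 w1 v2 w2 p : V.
Hypotheses (v1v1_gt0 : 0 < lform v1 v1) (w1w1_gt0 : 0 < lform w1 w1) (v1w1 : lform v1 w1 = 0).
Hypotheses (v2v2_gt0 : 0 < lform v2 v2) (w2w2_gt0 : 0 < lform w2 w2) (v2w2 : lform v2 w2 = 0).
Hypotheses (hp : hpoint p)
  (pv1 : lform p v1 = 0) (pw1 : lform p w1 = 0) (pv2 : lform p v2 = 0) (pw2 : lform p w2 = 0).
Hypothesis p_unique : forall q, hpoint q ->
  lform q v1 = 0 -> lform q w1 = 0 -> lform q v2 = 0 -> lform q w2 = 0 -> q = p.

Lemma normal_spans_meet_trivially a1 b1 a2 b2 :
  a1 *: v1 + b1 *: w1 = a2 *: v2 + b2 *: w2 -> a1 *: v1 + b1 *: w1 = 0.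
Proof.
move=> spans_eq; apply/eqP/negPn/negP => x_neq0.
pose f (j : 'I_5) := nth 0 [:: p; v1; w1; v2; w2] j.
pose c : 'cV[R]_5 := \col_j nth 0 [:: 0; a1; b1; - a2; - b2] j.
have c_neq0 : c != 0.
  apply: contraNneq x_neq0 => c_eq0.
  have := congr1 (fun M : 'cV[R]_5 => M c1 0) c_eq0.
  have := congr1 (fun M : 'cV[R]_5 => M c2 0) c_eq0.
  by rewrite !mxE /= => -> ->; rewrite !scale0r addr0.
have dep : \sum_j c j 0 *: f j = 0.
  by rewrite sum_ord5 !mxE /= scale0r add0r !scaleNr -addrA -opprD spans_eq subrr.
have [u u_neq0 u_perp] := exists_lform_orth_dependent c_neq0 dep.
have up : lform u p = 0 := u_perp ord0.
have [q [hq q_neq_p q_perp]] := exists_other_hpoint hp up (lform_orth_hpoint_gt0 hp up u_neq0).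
apply: q_neq_p; apply: p_unique => //; apply: q_perp => //.
- exact: u_perp c1.
- exact: u_perp c2.
- exact: u_perp c3.
- exact: u_perp c4.
Qed.

Lemma half_turn_product_fixed (y : V) :
  (refl v1 *m refl w1) *m ((refl v2 *m refl w2) *m y) = y ->
  (refl v2 *m refl w2) *m y = y.
Proof.
set H1 := refl v1 *m refl w1; set H2 := refl v2 *m refl w2.
move=> fix_y; pose d := y - H2 *m y.
have H1y : H1 *m y = H2 *m y by rewrite -{1}fix_y (half_turn_invol v1v1_gt0 w1w1_gt0 v1w1).
have H1d : H1 *m d = - d by rewrite mulmxBr H1y fix_y opprB.
have H2d : H2 *m d = - d by rewrite mulmxBr (half_turn_invol v2v2_gt0 w2w2_gt0 v2w2) opprB.
have [a1 [b1 d1]] := half_turn_anti v1w1 H1d.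
have [a2 [b2 d2]] := half_turn_anti v2w2 H2d.
have d_eq0 : d = 0.
  by rewrite d1; apply: (normal_spans_meet_trivially (a2 := a2) (b2 := b2)); rewrite -d1.
by apply/esym/eqP; rewrite -subr_eq0 -/d d_eq0.
Qed.

End TwoHalfTurns.

End Lorentz.

Theorem lemma6p6 (R : realType) (P Q : 'cV[R]_5 -> Prop) (HP HQ : 'M[R]_5) :
  plane P -> plane Q ->
  ~ (forall x, P x <-> Q x) ->
  (exists! x, P x /\ Q x) ->
  half_turn P HP -> half_turn Q HQ ->
  elliptic_typeII (HP *m HQ) /\ orientation_preserving (HP *m HQ).
Proof.
move=> _ _ _ [p [[Pp Qp] PQ_p]] [v1 [w1 [v1v1 w1w1 v1w1 P_def ->]]]
  [v2 [w2 [v2v2 w2w2 v2w2 Q_def ->]]].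
have [hp [pv1 pw1]] := (P_def p).1 Pp.
have [_ [pv2 pw2]] := (Q_def p).1 Qp.
have p_unique q : hpoint q ->
    lform q v1 = 0 -> lform q w1 = 0 -> lform q v2 = 0 -> lform q w2 = 0 -> q = p.
  by move=> hq *; apply/esym/PQ_p; split; [apply/P_def | apply/Q_def].
split; last first.
  rewrite /orientation_preserving !det_mulmx.
  by rewrite (det_refl v1v1) (det_refl w1w1) (det_refl v2v2) (det_refl w2w2) !mulrNN !mulr1.
split; first by do !apply: isometry_mulmx; apply: isometry_refl.
exists p; split.
  split=> //; rewrite -mulmxA.
  rewrite ((half_turn_fixE v2v2 w2w2 v2w2 p).2 (conj pv2 pw2)).
  by rewrite ((half_turn_fixE v1v1 w1w1 v1w1 p).2 (conj pv1 pw1)).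
move=> y [hy]; rewrite -mulmxA => fix_y.
have H2y := half_turn_product_fixed v1v1 w1w1 v1w1 v2v2 w2w2 v2w2 hp pv1 pw1 pv2 pw2 p_unique fix_y.
have H1y := fix_y; rewrite H2y in H1y.
have [yv1 yw1] := (half_turn_fixE v1v1 w1w1 v1w1 y).1 H1y.
have [yv2 yw2] := (half_turn_fixE v2v2 w2w2 v2w2 y).1 H2y.
by apply/esym/p_unique.
Qed.
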